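(* Let $\alpha$ be a normalized, right-continuous dynamic coherent acceptability index and $(\rho^x)_{x\in(0,\infty)}$ the corresponding family of dynamic coherent risk measures. Assume that for each $x>0$ the DCRM $\rho^x$ is strongly time consistent, and that all one-step risk measures $\rho^x_{t,t+1}$ are identical across nodes in the sense of condition (I) of the context. Then, in the market model of the context (short-selling constraints), the maximal acceptability is independent of wealth, time and state: $\alpha^*_t(V_t;\omega)=\alpha^*_0(1)$ for all $t\in\{0,\dots,T-1\}$, all $\omega\in\Omega$ and all strictly positive $V_t\in L_t$.
   Context: Setting: $\mathcal T=\{0,\dots,T\}$, finite filtered probability space $(\Omega,\mathcal F,(\mathcal F_t)_{t\in\mathcal T},\mathbb P)$ with $\mathbb P$ of full support and $\mathcal F_0$ trivial; $\mathcal P_t$ is the partition of $\Omega$ generating $\mathcal F_t$; $L_t$ denotes $\mathcal F_t$-measurable random variables; $\mathbb D$ is the set of adapted real processes $D=(D_t)_{t=0}^T$ (cash flows); $\mathbb 1_{\{s\}}$ denotes the process equal to $1$ at time $s$ and $0$ otherwise, and $\mathbb 1_A$ the indicator of an event. A dynamic coherent acceptability index (DCAI) is $\alpha:\mathcal T\times\mathbb D\times\Omega\to[0,\infty]$ such that for all $t$, $D,D'\in\mathbb D$, $A\in\mathcal F_t$: (A1) $\alpha_t(D)$ is $\mathcal F_t$-measurable; (A2) if $\mathbb 1_AD_s=\mathbb 1_AD'_s$ for all $s\ge t$ then $\mathbb 1_A\alpha_t(D)=\mathbb 1_A\alpha_t(D')$; (A3) if $D_s\ge D'_s$ for all $s\ge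 t$ then $\alpha_t(D)\ge\alpha_t(D')$; (A4) $\alpha_t(\lambda D)=\alpha_t(D)$ for $\lambda\in L_t$, $\lambda>0$; (A5) $\alpha_t(\lambda D+(1-\lambda)D')\ge\min\{\alpha_t(D),\alpha_t(D')\}$ for $0\le\lambda\le1$, $\lambda\in L_t$; (A6) $\alpha_t(D+m\mathbb 1_{\{t\}})=\alpha_t(D+m\mathbb 1_{\{s\}})$ for $m\in L_t$, $s\ge t$; (A7) if $D_t\ge0\ge D'_t$ and there is $m\in L_t$ with $\alpha_{t+1}(D)\ge m\ge\alpha_{t+1}(D')$ then $\alpha_t(D)\ge m\ge\alpha_t(D')$. It is normalized if for all $t,\omega$ there are $D,D'$ with $\alpha_t(D,\omega)=\infty$, $\alpha_t(D',\omega)=0$; right-continuous if $\lim_{c\to0^+}\alpha_t(D+c\mathbb 1_{\{t\}},\omega)=\alpha_t(D,\omega)$. A dynamic coherent risk measure (DCRM) is $\rho:\mathcal T\times\mathbb D\times\Omega\to\mathbb R$ with (R1) adaptedness; (R2) independence of the past (as A2); (R3) $D_s\ge D'_s\ \forall s\ge t\Rightarrow\rho_t(D)\le\rho_t(D')$; (R4) $\rho_t(\lambda D)=\lambda\rho_t(D)$, $\lambda\in L_t$, $\lambda>0$; (R5) subadditivity; (R6) $\rho_t(D+m\mathbb 1_{\{s\}})=\rho_t(D)-m$ for $m\in L_t$, $s\ge t$; (R7) $\mathbb 1_A(\min_{\omega\in A}\rho_{t+1}(D,\omega)-D_t)\le\mathbb 1_A\rho_t(D)\le\mathbb 1_A(\max_{\omega\in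 A}\rho_{t+1}(D,\omega)-D_t)$ for $A\in\mathcal F_t$. The family corresponding to $\alpha$ is $\rho^x_t(D,\omega):=\inf\{c\in\mathbb R:\alpha_t(D+c\mathbb 1_{\{t\}},\omega)\ge x\}$, $x>0$; it is an increasing left-continuous family of DCRMs with $\alpha_t(D,\omega)=\sup\{x>0:\rho^x_t(D,\omega)\le0\}$. A DCRM is strongly time consistent if for $D,D'$ and $t<T$: $D_t=D'_t$ and $\rho_{t+1}(D)=\rho_{t+1}(D')$ imply $\rho_t(D)=\rho_t(D')$ (equivalently $\rho_t(D)=\rho_t(-\rho_{t+1}(D)\mathbb 1_{\{t+1\}})-D_t$). One-step risk measures: $\rho^x_{t,t+1}(Z,\omega):=\rho^x_t(Z\mathbb 1_{\{t+1\}})(\omega)$ for $\mathcal F_{t+1}$-measurable $Z$. Condition (I): for all $t,s$, $\Omega_t\in\mathcal P_t$, $\Omega_s\in\mathcal P_s$, $\rho^x_{t,t+1}(D_{t+1},\omega)=\rho^x_{s,s+1}(D'_{s+1},\omega')$ for all $\omega\in\Omega_t$, $\omega'\in\Omega_s$ and all $D,D'$ such that $\mathbb 1_{\Omega_t}D_{t+1}$ and $\mathbb 1_{\Omega_s}D'_{s+1}$ have the same distribution and are zero outside $\Omega_t$ resp. $\Omega_s$. Market: $d$ assets with strictly positive gross returns $R_{s+1}\in\mathbb R^d$, $s=0,\dots,T-1$, i.i.d., generating the filtration. For $\mathcal F_t$-measurable wealth $V_t>0$, $\mathcal H_t^+(V_t)$ is the set of adapted $(h_s)_{s=t}^{T-1}$,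 $h_s\in\mathbb R^d_+$, with $\mathbf 1^\top h_s=V_s$, $V_{s+1}=R_{s+1}^\top h_s$. The dividend stream of $h$ is $D_s(h)=V_s-V_{s-1}$, and $D^{[t+1,T]}(h):=(0,\dots,0,D_{t+1}(h),\dots,D_T(h))$. Maximal acceptability: $\alpha^*_t(V_t;\omega):=\sup_{h\in\mathcal H^+_t(V_t)}\alpha_t(D^{[t+1,T]}(h);\omega)$. *)

From HB Require Import structures.
From mathcomp Require Import all_boot all_order all_algebra.
From mathcomp Require Import all_classical all_reals.
From mathcomp Require Import topology normedtype ereal.
Set Implicit Arguments. Unset Strict Implicit. Unset Printing Implicit Defensive.
Import Order.TTheory GRing.Theory Num.Theory.
Local Open Scope ring_scope.
Local Open Scope classical_set_scope.

Section Defs.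
Context {R : realType} {Omega : finType} {d : nat}.

(* Gross returns R_1, ..., R_T : Ret s w is the row vector R_s(w) in R^d. *)
Variable Ret : nat -> Omega -> 'rV[R]_d.

(* Processes (cash flows) D = (D_t)_t; only indices 0..T matter. *)
Definition proc := nat -> Omega -> R.

(* F_t = sigma(R_1,...,R_t): X is F_t-measurable iff X depends only on
   (R_1,...,R_t).  In particular F_0 is trivial. *)
Definition meas (t : nat) {U : Type} (X : Omega -> U) : Prop :=
  forall w w', (forall s, (1 <= s <= t)%N -> Ret s w = Ret s w') -> X w = X w'.

Definition atom (t : nat) (w0 : Omega) : pred Omega :=
  fun w => [forall s : 'I_t, Ret s.+1 w == Ret s.+1 w0].

Definition adapted (T : nat) (D : proc) : Prop :=
  forall t, (t <= T)%N -> meas t (D t).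

Definition plus_at (D : proc) (m : Omega -> R) (s : nat) : proc :=
  fun u w => D u w + (if u == s then m w else 0).
Definition single_at (Z : Omega -> R) (s : nat) : proc :=
  fun u w => if u == s then Z w else 0.
Definition scale (l : Omega -> R) (D : proc) : proc := fun u w => l w * D u w.
Definition comb (l : Omega -> R) (D D' : proc) : proc :=
  fun u w => l w * D u w + (1 - l w) * D' u w.

Variable T : nat.

Record is_DCAI (alpha : nat -> proc -> Omega -> \bar R) : Prop := {
  dcai_range : forall t D w, (t <= T)%N -> adapted T D -> (0 <= alpha t D w)%E;
  dcai_A1 : forall t D, (t <= T)%N -> adapted T D -> meas t (alpha t D);
  dcai_A2 : forall t D D' (A : pred Omega), (t <= T)%N -> adapted T D ->
    adapted T D' -> meas t A ->
    (forall s w, (t <= s <= T)%N -> A w -> D s w = D' s w) ->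
    forall w, A w -> alpha t D w = alpha t D' w;
  dcai_A3 : forall t D D', (t <= T)%N -> adapted T D -> adapted T D' ->
    (forall s w, (t <= s <= T)%N -> D' s w <= D s w) ->
    forall w, (alpha t D' w <= alpha t D w)%E;
  dcai_A4 : forall t D (l : Omega -> R), (t <= T)%N -> adapted T D ->
    meas t l -> (forall w, 0 < l w) ->
    forall w, alpha t (scale l D) w = alpha t D w;
  dcai_A5 : forall t D D' (l : Omega -> R), (t <= T)%N -> adapted T D ->
    adapted T D' -> meas t l -> (forall w, 0 <= l w <= 1) ->
    forall w, (Order.min (alpha t D w) (alpha t D' w) <= alpha t (comb l D D') w)%E;
  dcai_A6 : forall t s D (m : Omega -> R), (t <= s <= T)%N -> adapted T D ->
    meas t m -> forall w, alpha t (plus_at D m t) w = alpha t (plus_at D m s) w;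
  dcai_A7 : forall t D D' (m : Omega -> R), (t < T)%N -> adapted T D ->
    adapted T D' -> meas t m ->
    (forall w, D' t w <= 0 <= D t w) ->
    (forall w, (alpha t.+1 D' w <= (m w)%:E <= alpha t.+1 D w)%E) ->
    forall w, (alpha t D' w <= (m w)%:E <= alpha t D w)%E
}.

Definition normalized (alpha : nat -> proc -> Omega -> \bar R) : Prop :=
  forall t w, (t <= T)%N -> exists D D', adapted T D /\ adapted T D' /\
    alpha t D w = +oo%E /\ alpha t D' w = 0%E.

Definition right_continuous (alpha : nat -> proc -> Omega -> \bar R) : Prop :=
  forall t D w, (t <= T)%N -> adapted T D ->
    (fun c : R => alpha t (plus_at D (fun _ => c) t) w) @ (0 : R)^'+
      --> alpha t D w.

Definition rho (alpha : nat -> proc -> Omega -> \bar R) (x : R)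
    (t : nat) (D : proc) (w : Omega) : \bar R :=
  ereal_inf [set c%:E | c in [set c : R |
              (x%:E <= alpha t (plus_at D (fun _ => c) t) w)%E]].

Definition one_step (alpha : nat -> proc -> Omega -> \bar R) (x : R)
    (t : nat) (Z : Omega -> R) (w : Omega) : \bar R :=
  rho alpha x t (single_at Z t.+1) w.

Definition strongly_time_consistent (r : nat -> proc -> Omega -> \bar R) : Prop :=
  forall t D D', (t < T)%N -> adapted T D -> adapted T D' ->
    (forall w, D t w = D' t w) ->
    (forall w, r t.+1 D w = r t.+1 D' w) ->
    forall w, r t D w = r t D' w.

Variable P : Omega -> R.

Definition prob (A : pred Omega) : R := \sum_(w | A w) P w.

(* Condition (I); "same distribution" is read as equality of the
   distributions under P conditioned on the respective nodes. *)
Definition condition_I (r1 : nat -> (Omega -> R) -> Omega -> \bar R) : Prop :=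
  forall t s (w0 w0' : Omega) (D D' : proc), (t < T)%N -> (s < T)%N ->
    adapted T D -> adapted T D' ->
    (forall w, ~~ atom t w0 w -> D t.+1 w = 0) ->
    (forall w, ~~ atom s w0' w -> D' s.+1 w = 0) ->
    (forall v : R,
       prob (fun w => atom t w0 w && (D t.+1 w == v)) / prob (atom t w0) =
       prob (fun w => atom s w0' w && (D' s.+1 w == v)) / prob (atom s w0')) ->
    forall w w', atom t w0 w -> atom s w0' w' ->
      r1 t (D t.+1) w = r1 s (D' s.+1) w'.

Definition iid_returns : Prop :=
  (forall s, (1 <= s <= T)%N -> forall v,
     prob (fun w => Ret s w == v) = prob (fun w => Ret 1 w == v)) /\
  (forall v : nat -> 'rV[R]_d,
     prob (fun w => [forall s : 'I_T, Ret s.+1 w == v s.+1]) =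
     \prod_(s < T) prob (fun w => Ret s.+1 w == v s.+1)).

(* Strategies h = (h_s)_{s=t}^{T-1}, h_s in R^d (row vectors). *)
Definition wealth (t : nat) (V : Omega -> R) (h : nat -> Omega -> 'rV[R]_d)
    (s : nat) (w : Omega) : R :=
  if (s <= t)%N then V w else \sum_(i < d) Ret s w 0 i * h s.-1 w 0 i.

Definition admissible (t : nat) (V : Omega -> R)
    (h : nat -> Omega -> 'rV[R]_d) : Prop :=
  forall s, (t <= s < T)%N ->
    meas s (h s) /\ (forall w i, 0 <= h s w 0 i) /\
    (forall w, \sum_(i < d) h s w 0 i = wealth t V h s w).

Definition dividends (t : nat) (V : Omega -> R) (h : nat -> Omega -> 'rV[R]_d)
    : proc :=
  fun s w => if (t < s <= T)%N then wealth t V h s w - wealth t V h s.-1 w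
             else 0.

Definition max_acc (alpha : nat -> proc -> Omega -> \bar R) (t : nat)
    (V : Omega -> R) (w : Omega) : \bar R :=
  ereal_sup [set alpha t (dividends t V h) w | h in [set h | admissible t V h]].

End Defs.

From HB Require Import structures.
From mathcomp Require Import all_boot all_order all_algebra.
From mathcomp Require Import all_classical all_reals.
From mathcomp Require Import topology normedtype ereal.
From mathcomp Require Import ring lra.
Import Order.TTheory GRing.Theory Num.Theory.
Local Open Scope ring_scope.

(* Fix a level x > 0 and let risk be the real value of rho^x.
   1. risk is finite (normalization and (A7) give cash bounds), and inherits
      from alpha cash invariance, homogeneity, monotonicity, locality and
      measurability; by right continuity, D is acceptable at level x at time t
      iff risk_t(D) <= 0 (acceptable_iff).
   2. With i.i.d. returns, the law of the excess return R_{s+1}^T pi - 1 on an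
      atom of P_s is that of R_1^T pi - 1, so by condition (I) its risk at any
      time and node is one number, period_risk pi (period_risk_transfer).
   3. For an admissible strategy, strong time consistency and homogeneity
      compare the risk of the dividends after s with the wealth at s times
      the one-period risk of the weights held at s.  Backward induction gives:
      if every portfolio has positive one-period risk, no strategy is
      acceptable (tail_risk_gt0); if some portfolio pi has nonpositive
      one-period risk, holding the constant weights pi is acceptable
      (tail_risk_le0).
   4. So some strategy from (t, V_t) is acceptable at level x iff an
      acceptable portfolio exists, which involves neither t nor V_t nor the
      state (acceptable_strategy_iff); comparing the suprema level by level
      gives max_acc_le, and the theorem follows. *)

Section FiniteBounds.
Context {R : realType} {Omega : finType}.

Lemma uniform_upper_witness (Q : Omega -> R -> Prop) :
  (forall w, exists c, Q w c) -> (forall w c c', Q w c -> c <= c' -> Q w c') ->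
  exists c, forall w, Q w c.
Proof.
move=> Hex Hup; have [f Hf] := boolp.choice Hex.
exists (\sum_w `|f w|) => w; apply: (Hup _ (f w)) => //.
rewrite (bigD1 w) //=; have := ler_norm (f w).
have : 0 <= \sum_(i | i != w) `|f i| by apply: sumr_ge0.
lra.
Qed.

Lemma uniform_lower_witness (Q : Omega -> R -> Prop) :
  (forall w, exists c, Q w c) -> (forall w c c', Q w c -> c' <= c -> Q w c') ->
  exists c, forall w, Q w c.
Proof.
move=> Hex Hdown.
have Hex' : forall w, exists c, Q w (- c).
  by move=> w; have [c Hc] := Hex w; exists (- c); rewrite opprK.
have Hup : forall w c c', Q w (- c) -> c <= c' -> Q w (- c').
  by move=> w c c' Hq cc'; apply: Hdown Hq _; rewrite lerN2.
have [c Hc] := uniform_upper_witness _ Hex' Hup.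
by exists (- c).
Qed.

End FiniteBounds.

Lemma backward_induction (Q : nat -> Prop) (t T : nat) :
  Q T -> (forall s, (t <= s < T)%N -> Q s.+1 -> Q s) -> forall s, (t <= s <= T)%N -> Q s.
Proof.
move=> QT step; suff H k s : (T - s)%N = k -> (t <= s <= T)%N -> Q s.
  by move=> s; exact: H.
elim: k s => [|k IH] s Hk /andP[ts sT].
  by have -> : s = T by apply/eqP; rewrite eqn_leq sT -subn_eq0 Hk.
have sT' : (s < T)%N by rewrite -subn_gt0 Hk.
apply: step; first by rewrite ts.
by apply: IH; [rewrite subnS Hk | rewrite (leqW ts) sT'].
Qed.

Lemma ereal_le_by_levels {R : realType} (a b : \bar R) : (0 <= b)%E ->
  (forall y : R, 0 < y -> (y%:E <= a)%E -> (y%:E <= b)%E) -> (a <= b)%E.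
Proof.
move=> b_ge0 Hlev; rewrite leNgt; apply/negP => ba.
have [y [y0 yb ya]] : exists y : R, [/\ 0 < y, (b < y%:E)%E & (y%:E <= a)%E].
  move: b_ge0 ba {Hlev}; case: b => [r| |] // r0.
    case: a => [ra| |] // rra.
      exists ((r + ra) / 2); move: r0 rra; rewrite !lte_fin !lee_fin => r0 rra; split; lra.
    by exists (r + 1); rewrite lte_fin leey; split => //; move: r0; rewrite lee_fin; lra.
  by rewrite ltNge leey.
by have := Hlev y y0 ya; rewrite leNgt yb.
Qed.

Section Model.
Variables (R : realType) (Omega : finType) (d T : nat) (P : Omega -> R)
  (Ret : nat -> Omega -> 'rV[R]_d) (alpha : nat -> @proc R Omega -> Omega -> \bar R).
Local Notation proc := (@proc R Omega).
Hypothesis P_gt0 : forall w, 0 < P w.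
Hypothesis P_sum1 : \sum_(w : Omega) P w = 1.
Hypothesis Ret_gt0 : forall s w (i : 'I_d), (1 <= s <= T)%N -> 0 < Ret s w 0 i.
Hypothesis Hiid : iid_returns Ret T P.
Hypothesis HA : is_DCAI Ret T alpha.
Hypothesis Hnorm : normalized Ret T alpha.
Hypothesis Hrc : right_continuous Ret T alpha.
Hypothesis Hstc : forall x : R, 0 < x -> strongly_time_consistent Ret T (rho alpha x).
Hypothesis HI : forall x : R, 0 < x -> condition_I Ret T P (one_step alpha x).

Lemma meas_mono {s u : nat} {U : Type} {X : Omega -> U} :
  (s <= u)%N -> meas Ret s X -> meas Ret u X.
Proof.
move=> su HX w w' E; apply: HX => k /andP[k1 ks]; apply: E.
by rewrite k1 (leq_trans ks su).
Qed.

Lemma meas_const {t : nat} {U : Type} {c : U} : meas Ret t (fun _ : Omega => c).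
Proof. by []. Qed.

Lemma meas_comp2 {t : nat} {U1 U2 V : Type} (f : U1 -> U2 -> V)
    {X : Omega -> U1} {Y : Omega -> U2} :
  meas Ret t X -> meas Ret t Y -> meas Ret t (fun w => f (X w) (Y w)).
Proof. by move=> HX HY w w' E; rewrite (HX w w' E) (HY w w' E). Qed.

Lemma meas_Ret {s : nat} : (1 <= s)%N -> meas Ret s (Ret s).
Proof. by move=> s1 w w' E; apply: E; rewrite s1 leqnn. Qed.

Lemma meas_atom {t : nat} {w0 : Omega} : meas Ret t (atom Ret t w0).
Proof. by move=> w w' E; apply: eq_forallb => i; rewrite (E i.+1) // ltn_ord. Qed.

Lemma atom_meas {t : nat} {U : Type} {X : Omega -> U} {w0 w : Omega} :
  meas Ret t X -> atom Ret t w0 w -> X w = X w0.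
Proof.
move=> HX /forallP A; apply: HX => s /andP[s1 st].
have st' : (s.-1 < t)%N by rewrite prednK.
by have /eqP := A (Ordinal st'); rewrite /= prednK.
Qed.

Lemma atom_refl {t : nat} {w : Omega} : atom Ret t w w.
Proof. by apply/forallP. Qed.

Lemma atom0 {w0 w : Omega} : atom Ret 0 w0 w.
Proof. by apply/forallP => -[]. Qed.

Lemma adapted_plus {D : proc} {m : Omega -> R} {s : nat} :
  adapted Ret T D -> meas Ret s m -> adapted Ret T (plus_at D m s).
Proof.
move=> HD Hm u uT; rewrite /plus_at; case: (eqVneq u s) => [us|_].
  by rewrite us; apply: (meas_comp2 +%R) => //; apply: HD; rewrite -us.
by apply: (meas_comp2 +%R) => //; apply: HD.
Qed.

Lemma adapted_single {Z : Omega -> R} {s : nat} : meas Ret s Z -> adapted Ret T (single_at Z s).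
Proof. by move=> HZ u uT; rewrite /single_at; case: (eqVneq u s) => [->|]. Qed.

Lemma adapted_scale {D : proc} {l : R} : adapted Ret T D -> adapted Ret T (scale (fun _ => l) D).
Proof. by move=> HD u uT; apply: (meas_comp2 *%R) => //; apply: HD. Qed.

Lemma prob_partition {X : eqType} (F : Omega -> X) (L : seq X) (A : pred Omega) :
  uniq L -> (forall w, F w \in L) ->
  prob P A = \sum_(u <- L) prob P (fun w => A w && (F w == u)).
Proof.
move=> uL FL; rewrite /prob.
rewrite (eq_bigr (fun u => \sum_(w | A w) (if F w == u then P w else 0))); last first.
  by move=> u _; rewrite big_mkcondr.
rewrite exchange_big /=; apply: eq_bigr => w Aw.
rewrite (bigD1_seq (F w)) //= eqxx big1 ?addr0 // => u.
by rewrite eq_sym => /negbTE ->.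
Qed.

Lemma prob_push {X : eqType} (F : Omega -> X) (L : seq X) (A : pred Omega) (E : pred X) :
  uniq L -> (forall w, F w \in L) ->
  prob P (fun w => A w && E (F w)) =
  \sum_(u <- L) (if E u then prob P (fun w => A w && (F w == u)) else 0).
Proof.
move=> uL FL; rewrite (prob_partition F L) //; apply: eq_bigr => u _.
case: ifP => Eu.
  by apply: eq_bigl => w /=; case: eqP => [->|]; rewrite ?Eu ?andbT ?andbF.
by rewrite /prob big_pred0 // => w /=; case: eqP => [->|]; rewrite ?Eu ?andbF.
Qed.

Definition values {X : eqType} (F : Omega -> X) : seq X :=
  undup [seq F w | w <- enum Omega].

Lemma values_uniq {X : eqType} (F : Omega -> X) : uniq (values F).
Proof. exact: undup_uniq. Qed.

Lemma values_mem {X : eqType} (F : Omega -> X) w : F w \in values F.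
Proof. by rewrite mem_undup; apply: map_f; rewrite mem_enum. Qed.

Lemma sum_prob_values {X : eqType} (F : Omega -> X) :
  \sum_(u <- values F) prob P (fun w => F w == u) = 1.
Proof.
rewrite -P_sum1 -[RHS]/(prob P (fun _ => true)).
by rewrite (prob_partition F (values F)) //; [exact: values_uniq | exact: values_mem].
Qed.

Definition returns_fixed (K : {set 'I_T}) (v : nat -> 'rV[R]_d) : pred Omega :=
  fun w => [forall j : 'I_T, (j \in K) ==> (Ret j.+1 w == v j.+1)].

Definition upd (v : nat -> 'rV[R]_d) (n : nat) (u : 'rV[R]_d) : nat -> 'rV[R]_d :=
  fun k => if k == n then u else v k.

Lemma eqS_ord (i j : 'I_T) : (i.+1 == j.+1) = (i == j).
Proof. by rewrite eqSS. Qed.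

Lemma returns_fixed_add (K : {set 'I_T}) v j u : j \notin K ->
  (fun w => returns_fixed K v w && (Ret j.+1 w == u)) =
  returns_fixed (j |: K) (upd v j.+1 u).
Proof.
move=> jK; apply/funext => w; rewrite /returns_fixed /upd; apply/andP/forallP.
  move=> [/forallP H1 H2] i; apply/implyP; rewrite in_setU1.
  case: (eqVneq i j) => [->|ij] /=; first by rewrite eqxx.
  by rewrite eqS_ord (negbTE ij) => iK; exact: (implyP (H1 i) iK).
move=> H; split; last by have := implyP (H j); rewrite in_setU1 !eqxx => /(_ isT).
apply/forallP => i; apply/implyP => iK.
have ij : i != j by apply: contraNneq jK => <-.
by have := implyP (H i); rewrite in_setU1 iK orbT eqS_ord (negbTE ij) => /(_ isT).
Qed.

Lemma prod_upd_out (K : {set 'I_T}) v j u : j \notin K ->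
  \prod_(i in K) prob P (fun w => Ret i.+1 w == upd v j.+1 u i.+1) =
  \prod_(i in K) prob P (fun w => Ret i.+1 w == v i.+1).
Proof.
move=> jK; apply: eq_bigr => i iK; have ij : i != j by apply: contraNneq jK => <-.
by rewrite /upd eqS_ord (negbTE ij).
Qed.

(* Independence of the returns, for any subfamily: obtained from the joint
   law of all returns by summing out the returns outside K one at a time. *)
Lemma prob_returns_fixed (K : {set 'I_T}) v :
  prob P (returns_fixed K v) = \prod_(j in K) prob P (fun w => Ret j.+1 w == v j.+1).
Proof.
move Hn : #|~: K| => n; elim: n K v Hn => [|n IH] K v Hc.
  have -> : K = [set: 'I_T].
    by apply/finset.setP => i; move/cards0_eq/finset.setP: Hc => /(_ i); rewrite !inE => /negbFE ->.
  under eq_bigl do rewrite inE.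
  rewrite -Hiid.2; congr (prob P _); apply/funext => w.
  by apply: eq_forallb => j; rewrite inE.
have [j Hj] : exists j, j \in ~: K by apply/set0Pn; rewrite -card_gt0 Hc.
have jK : j \notin K by rewrite -finset.in_setC.
have Hc' : #|~: (j |: K)| = n.
  have -> : ~: (j |: K) = (~: K) :\ j by apply/finset.setP => i; rewrite !inE negb_or andbC.
  by move: Hc; rewrite (cardsD1 j) Hj add1n => -[].
rewrite (prob_partition (Ret j.+1) (values (Ret j.+1))); [|exact: values_uniq|exact: values_mem].
rewrite (eq_bigr (fun u => prob P (fun w => Ret j.+1 w == u) *
    \prod_(i in K) prob P (fun w => Ret i.+1 w == v i.+1))).
  by rewrite -big_distrl /= sum_prob_values mul1r.
move=> u _; rewrite (returns_fixed_add _ _ _ _ jK) (IH _ _ Hc') big_setU1 //=.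
by rewrite (prod_upd_out _ _ _ _ jK) /upd eqxx.
Qed.

Lemma atom_returns_fixed s w0 : (s <= T)%N ->
  atom Ret s w0 = returns_fixed [set j : 'I_T | (j < s)%N] (fun k => Ret k w0).
Proof.
move=> sT; apply/funext => w; rewrite /atom /returns_fixed; apply/forallP/forallP => H j.
  by apply/implyP; rewrite inE => js; exact: (H (Ordinal js)).
have jT : (j < T)%N := leq_trans (ltn_ord j) sT.
by have := implyP (H (Ordinal jT)); rewrite inE /= ltn_ord => /(_ isT).
Qed.

Lemma prob_atom_return s w0 u : (s < T)%N ->
  prob P (fun w => atom Ret s w0 w && (Ret s.+1 w == u)) =
  prob P (atom Ret s w0) * prob P (fun w => Ret s.+1 w == u).
Proof.
move=> sT; pose j0 := Ordinal sT; pose K := [set j : 'I_T | (j < s)%N].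
have j0K : j0 \notin K by rewrite inE ltnn.
rewrite atom_returns_fixed ?(ltnW sT) // -/K.
have -> : (fun w => returns_fixed K (fun k => Ret k w0) w && (Ret s.+1 w == u)) =
    returns_fixed (j0 |: K) (upd (fun k => Ret k w0) s.+1 u) := returns_fixed_add _ _ _ _ j0K.
rewrite !prob_returns_fixed big_setU1 //= (prod_upd_out _ _ _ _ j0K).
by rewrite /upd eqxx mulrC.
Qed.

Lemma prob_atom_indep s w0 (E : pred 'rV[R]_d) : (s < T)%N ->
  prob P (fun w => atom Ret s w0 w && E (Ret s.+1 w)) =
  prob P (atom Ret s w0) * prob P (fun w => E (Ret s.+1 w)).
Proof.
move=> sT; have uV := values_uniq (Ret s.+1); have mV := values_mem (Ret s.+1).
rewrite (prob_push _ _ _ _ uV mV).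
rewrite -[prob P (fun w => E _)]/(prob P (fun w => true && E (Ret s.+1 w))).
rewrite (prob_push _ _ _ _ uV mV) big_distrr /=; apply: eq_bigr => u _.
by case: (E u); rewrite ?mulr0 // prob_atom_return.
Qed.

Lemma prob_return_ident s (E : pred 'rV[R]_d) : (1 <= s <= T)%N ->
  prob P (fun w => E (Ret s w)) = prob P (fun w => E (Ret 1 w)).
Proof.
move=> sT; pose L := undup (values (Ret s) ++ values (Ret 1)).
have mL k w : (k == s) || (k == 1%N) -> Ret k w \in L.
  by move=> /orP[] /eqP ->; rewrite mem_undup mem_cat values_mem ?orbT.
rewrite -[prob P (fun w => E (Ret s w))]/(prob P (fun w => true && E (Ret s w))).
rewrite -[prob P (fun w => E (Ret 1 w))]/(prob P (fun w => true && E (Ret 1 w))).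
rewrite (prob_push (Ret s) L) ?undup_uniq //; last by move=> w; apply: mL; rewrite eqxx.
rewrite (prob_push (Ret 1) L) ?undup_uniq //; last by move=> w; apply: mL; rewrite eqxx orbT.
by apply: eq_bigr => u _; case: (E u) => //; exact: (Hiid.1 s sT u).
Qed.

Lemma prob_atom_gt0 s w0 : 0 < prob P (atom Ret s w0).
Proof.
rewrite /prob (bigD1 w0) ?atom_refl //=; apply: ltr_pwDl (P_gt0 w0) _.
by apply: sumr_ge0 => i _; exact: ltW.
Qed.

(* Hence the conditional law of f(R_{s+1}) given any atom of P_s is the law
   of f(R_1) (the atom of P_0 being the whole space). *)
Lemma cond_law_return s w0 w0' (f : 'rV[R]_d -> R) v : (s < T)%N ->
  prob P (fun w => atom Ret s w0 w && (f (Ret s.+1 w) == v)) / prob P (atom Ret s w0) =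
  prob P (fun w => atom Ret 0 w0' w && (f (Ret 1 w) == v)) / prob P (atom Ret 0 w0').
Proof.
move=> sT; rewrite (prob_atom_indep s w0 (fun r => f r == v) sT) mulrC mulKf.
  rewrite (prob_return_ident s.+1 (fun r => f r == v)) /=; last by rewrite sT.
  have -> : atom Ret 0 w0' = (fun _ => true) by apply/funext => w; exact: atom0.
  by rewrite -[prob P (fun _ => true)]/(\sum_w P w) P_sum1 divr1.
by rewrite gt_eqF // prob_atom_gt0.
Qed.

Definition simplex (pi : 'rV[R]_d) : Prop := (forall i, 0 <= pi 0 i) /\ \sum_i pi 0 i = 1.

Definition tail_div t V h s : proc := fun u w =>
  if (s < u <= T)%N then wealth Ret t V h u w - wealth Ret t V h u.-1 w else 0.

Definition weights t V h s w : 'rV[R]_d := (wealth Ret t V h s w)^-1 *: h s w.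

Section Strategy.
Context {t : nat} {V : Omega -> R} {h : nat -> Omega -> 'rV[R]_d}.
Hypothesis HV : meas Ret t V.
Hypothesis HVp : forall w, 0 < V w.
Hypothesis Hadm : admissible Ret T t V h.
Local Notation W := (wealth Ret t V h).

Lemma wealth_start : W t = V.
Proof. by apply/funext => w; rewrite /wealth leqnn. Qed.

Lemma wealth_succ u w : (t <= u)%N -> W u.+1 w = \sum_(i < d) Ret u.+1 w 0 i * h u w 0 i.
Proof. by move=> tu; rewrite /wealth ltnNge tu. Qed.

(* Between t and T, wealth is adapted and strictly positive: the positive
   returns act on nonnegative holdings with positive total value. *)
Lemma wealth_meas u : (t <= u <= T)%N -> meas Ret u (W u).
Proof.
case/andP; case: u => [|u] tu uT.
  by move: tu; rewrite leqn0 => /eqP <-; rewrite wealth_start.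
case: (ltnP t u.+1) => tu'; last first.
  by rewrite (_ : u.+1 = t) ?wealth_start //; apply/eqP; rewrite eqn_leq tu' tu.
have tu2 : (t <= u)%N by rewrite -ltnS.
have [Hm _] : meas Ret u (h u) /\ _ := Hadm u (introT andP (conj tu2 uT)).
move=> w w' E; rewrite !wealth_succ //; apply: eq_bigr => i _.
by rewrite (meas_Ret (isT : (1 <= u.+1)%N) w w' E) (meas_mono (leqnSn u) Hm w w' E).
Qed.

Lemma wealth_gt0 u w : (t <= u)%N -> (u <= T)%N -> 0 < W u w.
Proof.
elim: u => [|u IH] tu uT.
  by move: tu; rewrite leqn0 => /eqP <-; rewrite wealth_start.
case: (ltnP t u.+1) => tu'; last first.
  by rewrite (_ : u.+1 = t) ?wealth_start //; apply/eqP; rewrite eqn_leq tu' tu.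
have tu2 : (t <= u)%N by rewrite -ltnS.
have [_ [Hnn Hsum]] := Hadm u (introT andP (conj tu2 uT)).
have term_ge0 (i : 'I_d) : true -> 0 <= Ret u.+1 w 0 i * h u w 0 i.
  by move=> _; apply: mulr_ge0 (Hnn w i); apply: ltW; apply: Ret_gt0; rewrite uT.
rewrite wealth_succ // lt_def sumr_ge0 // andbT; apply/eqP => S0.
have := IH tu2 (ltnW uT); rewrite -Hsum big1 ?ltxx // => i _.
have /eqP := @psumr_eq0P _ _ _ _ term_ge0 S0 i isT; rewrite mulf_eq0 => /orP[/eqP R0|/eqP //].
by have := Ret_gt0 u.+1 w i; rewrite uT R0 ltxx => /(_ isT).
Qed.

Lemma wealth_incr_meas s : (t <= s)%N -> (s < T)%N ->
  meas Ret s.+1 (fun w => W s.+1 w - W s w).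
Proof.
move=> ts sT; apply: (meas_comp2 (fun a b : R => a - b)).
  by apply: wealth_meas; rewrite (leqW ts) sT.
by apply: (meas_mono (leqnSn s)); apply: wealth_meas; rewrite ts ltnW.
Qed.

Lemma weights_simplex s w : (t <= s < T)%N -> simplex (weights t V h s w).
Proof.
move=> tsT; have [_ [Hnn Hsum]] := Hadm s tsT.
have W_gt0 : 0 < W s w by case/andP: tsT => ts /ltnW; exact: wealth_gt0.
split => [i|]; first by rewrite mxE mulr_ge0 ?invr_ge0 ?(ltW W_gt0).
under eq_bigr do rewrite mxE.
by rewrite -big_distrr /= Hsum mulVf // gt_eqF.
Qed.

Lemma tail_div_adapted s : (t <= s)%N -> adapted Ret T (tail_div t V h s).
Proof.
move=> ts u uT; rewrite /tail_div; case E: (s < u <= T)%N; last exact: meas_const.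
move: E => /andP[su _]; have tu : (t <= u)%N := leq_trans ts (ltnW su).
have su' : (s <= u.-1)%N by rewrite -ltnS prednK //; exact: leq_ltn_trans (leq0n s) su.
apply: (meas_comp2 (fun a b : R => a - b)); first by apply: wealth_meas; rewrite tu uT.
apply: (meas_mono (leq_pred u)); apply: wealth_meas.
by rewrite (leq_trans ts su') (leq_trans (leq_pred u) uT).
Qed.

Lemma tail_div_step s : (s < T)%N ->
  tail_div t V h s = plus_at (tail_div t V h s.+1) (fun w => W s.+1 w - W s w) s.+1.
Proof.
move=> sT; apply/funext => u; apply/funext => v; rewrite /tail_div /plus_at.
case: (eqVneq u s.+1) => [->|us]; first by rewrite ltnSn sT ltnn /= add0r.
by rewrite addr0 (ltn_neqAle s.+1 u) eq_sym us.
Qed.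

Lemma tail_div_T : tail_div t V h T = (fun _ _ => 0).
Proof. by apply/funext => u; apply/funext => v; rewrite /tail_div; case: ltnP. Qed.

End Strategy.

Lemma constant_weights_strategy t V (pi : 'rV[R]_d) : meas Ret t V -> (forall w, 0 < V w) ->
  simplex pi -> exists h, admissible Ret T t V h /\
    forall s w, (t <= s)%N -> h s w = wealth Ret t V h s w *: pi.
Proof.
move=> HV HVp [p0 p1].
pose Wc u w := V w * \prod_(t <= k < u) (\sum_(i < d) Ret k.+1 w 0 i * pi 0 i).
pose h := fun u w => Wc u w *: pi.
have WcE k w : wealth Ret t V h (t + k)%N w = Wc (t + k)%N w.
  case: k => [|k]; first by rewrite addn0 /wealth leqnn /Wc big_geq ?mulr1.
  rewrite addnS wealth_succ ?leq_addr // /Wc big_nat_recr ?leq_addr //= mulrA.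
  rewrite -/(Wc (t + k)%N w) big_distrr /=; apply: eq_bigr => i _; rewrite /h mxE; ring.
have WcE' s w : (t <= s)%N -> wealth Ret t V h s w = Wc s w.
  by move=> ts; rewrite -(subnKC ts) WcE.
have Wc_ge0 s w : (s <= T)%N -> 0 <= Wc s w.
  move=> sT; apply: mulr_ge0; first exact: ltW.
  rewrite big_nat_cond; apply: prodr_ge0 => k /andP[/andP[_ ks] _].
  apply: sumr_ge0 => i _; apply: mulr_ge0 (p0 i); apply: ltW; apply: Ret_gt0.
  by rewrite /= (leq_trans ks sT).
exists h; split; last by move=> s w ts; rewrite WcE'.
move=> s /andP[ts sT]; split; [|split].
- move=> w w' E; rewrite /h /Wc (meas_mono ts HV w w' E); congr (_ * _ *: _).
  by apply: eq_big_nat => k /andP[_ ks]; rewrite (E k.+1).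
- by move=> w i; rewrite /h mxE; apply: mulr_ge0 (p0 i); exact: Wc_ge0 (ltnW sT).
- move=> w; rewrite WcE' // /h; under eq_bigr do rewrite mxE.
  by rewrite -big_distrr /= p1 mulr1.
Qed.

Section Level.
Local Open Scope classical_set_scope.
Variable x : R.
Hypothesis x_gt0 : 0 < x.

Definition acc_set t (D : proc) w : set R :=
  [set c : R | (x%:E <= alpha t (plus_at D (fun _ => c) t) w)%E].

Definition risk t (D : proc) w : R := fine (rho alpha x t D w).

Lemma alpha_cash_mono t D s c c' w : (t <= T)%N -> adapted Ret T D -> c <= c' ->
  (alpha t (plus_at D (fun _ => c) s) w <= alpha t (plus_at D (fun _ => c') s) w)%E.
Proof.
move=> tT HD cc'; apply: (dcai_A3 HA) => //; try exact: adapted_plus.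
by move=> u v _; rewrite /plus_at; case: (u == s); rewrite ?lerD2l.
Qed.

Lemma acc_set_up t D w c c' : (t <= T)%N -> adapted Ret T D ->
  acc_set t D w c -> c <= c' -> acc_set t D w c'.
Proof. by move=> tT HD Hc cc'; apply: le_trans Hc _; exact: alpha_cash_mono. Qed.

Lemma alpha_cash_at_T t D c w : (t <= T)%N -> adapted Ret T D ->
  alpha t (plus_at D (fun _ => c) t) w = alpha t (plus_at D (fun _ => c) T) w.
Proof. by move=> tT HD; apply: (dcai_A6 HA) => //; rewrite tT leqnn. Qed.

Definition cash_bounded t (D : proc) : Prop :=
  (exists c, forall w, (x%:E <= alpha t (plus_at D (fun _ => c) T) w)%E) /\
  (exists c, forall w, (alpha t (plus_at D (fun _ => c) T) w <= 0)%E).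

(* At the horizon this follows from normalization and monotonicity. *)
Lemma cash_bounded_T D : adapted Ret T D -> cash_bounded T D.
Proof.
move=> HD; split.
  apply: (uniform_upper_witness (fun w c => x%:E <= alpha T (plus_at D (fun _ => c) T) w)%E).
    move=> w; have [D1 [_ [H1 [_ [E1 _]]]]] := Hnorm T w (leqnn T).
    exists (\sum_v `|D1 T v - D T v|); apply: le_trans (leey _) _.
    rewrite -E1; apply: (dcai_A3 HA) => //; first exact: adapted_plus.
    move=> s v /andP[Ts sT]; have -> : s = T by apply/eqP; rewrite eqn_leq sT Ts.
    rewrite /plus_at eqxx (bigD1 v) //=; have := ler_norm (D1 T v - D T v).
    have : 0 <= \sum_(i | i != v) `|D1 T i - D T i| by apply: sumr_ge0.
    lra.
  by move=> w c c' Hc cc'; apply: le_trans Hc _; exact: alpha_cash_mono.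
apply: (uniform_lower_witness (fun w c => alpha T (plus_at D (fun _ => c) T) w <= 0)%E).
  move=> w; have [_ [D0 [_ [H0 [_ E0]]]]] := Hnorm T w (leqnn T).
  exists (- \sum_v `|D T v - D0 T v|); rewrite -E0; apply: (dcai_A3 HA) => //.
    exact: adapted_plus.
  move=> s v /andP[Ts sT]; have -> : s = T by apply/eqP; rewrite eqn_leq sT Ts.
  rewrite /plus_at eqxx (bigD1 v) //=; have := ler_norm (D T v - D0 T v).
  have : 0 <= \sum_(i | i != v) `|D T i - D0 T i| by apply: sumr_ge0.
  lra.
by move=> w c c' Hc cc'; apply: le_trans Hc; exact: alpha_cash_mono.
Qed.

Definition defer t (D : proc) : proc :=
  fun u w => if u == t then 0 else D u w + (if u == T then D t w else 0).

Lemma adapted_defer t D : (t < T)%N -> adapted Ret T D -> adapted Ret T (defer t D).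
Proof.
move=> tT HD u uT; rewrite /defer; case: (eqVneq u t) => [_|_]; first exact: meas_const.
apply: (meas_comp2 +%R); first exact: HD.
case: (eqVneq u T) => [->|_]; last exact: meas_const.
by apply: meas_mono (ltnW tT) _; apply: HD; exact: ltnW.
Qed.

(* By (A6) the time-t payment D_t (an F_t-measurable amount) may be
   postponed to T without changing the acceptability at time t. *)
Lemma alpha_defer t D c w : (t < T)%N -> adapted Ret T D ->
  alpha t (plus_at D (fun _ => c) T) w = alpha t (plus_at (defer t D) (fun _ => c) T) w.
Proof.
move=> tT HD; have tnT : t != T by rewrite neq_ltn tT.
pose Dt0 : proc := fun u w => if u == t then 0 else D u w.
have HDt0 : adapted Ret T Dt0.
  by move=> u uT; rewrite /Dt0; case: (u == t); [exact: meas_const | exact: HD].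
have -> : plus_at D (fun _ => c) T = plus_at (plus_at Dt0 (fun _ => c) T) (D t) t.
  apply/funext => u; apply/funext => v; rewrite /plus_at /Dt0.
  by case: (eqVneq u t) => [->|_]; rewrite ?(negbTE tnT); lra.
have -> : plus_at (defer t D) (fun _ => c) T = plus_at (plus_at Dt0 (fun _ => c) T) (D t) T.
  apply/funext => u; apply/funext => v; rewrite /plus_at /Dt0 /defer.
  by case: (eqVneq u t) => [->|_]; rewrite ?(negbTE tnT); case: (u == T); lra.
apply: (dcai_A6 HA); first by rewrite leqnn ltnW.
- exact: adapted_plus.
- by apply: HD; exact: ltnW.
Qed.

(* Backward step by (A7): the deferred process pays nothing at time t, so
   the bounds at level x and 0 at time t+1 carry over to time t. *)
Lemma cash_bounded_step t D : (t < T)%N ->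
  (forall D', adapted Ret T D' -> cash_bounded t.+1 D') ->
  adapted Ret T D -> cash_bounded t D.
Proof.
move=> tT IH HD; have tnT : t != T by rewrite neq_ltn tT.
have HH := adapted_defer t D tT HD.
have [[c1 Hc1] [c0 Hc0]] := IH _ HH.
have Ht : forall w, (plus_at (defer t D) (fun _ => c0) T t w <= 0 <=
                     plus_at (defer t D) (fun _ => c1) T t w).
  by move=> w; rewrite /plus_at /defer eqxx (negbTE tnT) addr0 lexx.
have A7 m := dcai_A7 HA tT (adapted_plus HH meas_const) (adapted_plus HH meas_const)
  (meas_const (c := m)) Ht.
split; [exists c1 | exists c0] => w; rewrite alpha_defer //.
- have Hm : forall v, (alpha t.+1 (plus_at (defer t D) (fun _ => c0) T) v <= x%:E <=
      alpha t.+1 (plus_at (defer t D) (fun _ => c1) T) v)%E.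
    by move=> v; rewrite Hc1 andbT; apply: le_trans (Hc0 v) _; rewrite lee_fin (ltW x_gt0).
  by have /andP[_ ->] := A7 x Hm w.
- have Hm : forall v, (alpha t.+1 (plus_at (defer t D) (fun _ => c0) T) v <= 0%:E <=
      alpha t.+1 (plus_at (defer t D) (fun _ => c1) T) v)%E.
    by move=> v; rewrite Hc0 /=; apply: le_trans (Hc1 v); rewrite lee_fin (ltW x_gt0).
  by have /andP[-> _] := A7 0 Hm w.
Qed.

Lemma cash_bounded_all t D : (t <= T)%N -> adapted Ret T D -> cash_bounded t D.
Proof.
move=> tT; rewrite -(subKn tT); elim: (T - t)%N (leq_subr t T) D => [|k IH] kT D HD.
  by rewrite subn0; exact: cash_bounded_T.
have kT' : (T - k.+1 < T)%N by rewrite ltn_subrL (leq_ltn_trans (leq0n k) kT).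
apply: cash_bounded_step => // D' HD'.
by rewrite -subSn //; apply: IH => //; exact: ltnW.
Qed.

(* rho^x_t(D, w) is finite: it is the infimum of the nonempty, bounded below
   set acc_set t D w, whose elements are approached from above. *)
Lemma risk_props t D w : (t <= T)%N -> adapted Ret T D ->
  [/\ rho alpha x t D w = (risk t D w)%:E,
      (forall c, acc_set t D w c -> risk t D w <= c) &
      (forall e, 0 < e -> acc_set t D w (risk t D w + e))].
Proof.
move=> tT HD; have [[c1 H1] [c0 H0]] := cash_bounded_all t D tT HD.
have ne : acc_set t D w !=set0 by exists c1; rewrite /acc_set /= alpha_cash_at_T.
have lb : has_lbound (acc_set t D w).
  exists c0 => c Hc; rewrite leNgt; apply/negP => cc0.
  have A := alpha_cash_mono t D t c c0 w tT HD (ltW cc0).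
  rewrite [X in (_ <= X)%E]alpha_cash_at_T // in A.
  by have := le_trans (le_trans Hc A) (H0 w); rewrite lee_fin leNgt x_gt0.
have E : rho alpha x t D w = (inf (acc_set t D w))%:E by rewrite /rho ereal_inf_EFin.
have -> : risk t D w = inf (acc_set t D w) by rewrite /risk E.
split => //; first exact: ge_inf.
move=> e e0; have [c Hc ce] := inf_adherent e0 (conj ne lb).
by apply: acc_set_up Hc _ => //; exact: ltW.
Qed.

Lemma rho_risk t D w : (t <= T)%N -> adapted Ret T D ->
  rho alpha x t D w = (risk t D w)%:E.
Proof. by move=> tT HD; have [] := risk_props t D w tT HD. Qed.

Lemma risk_unique t D w y : (t <= T)%N -> adapted Ret T D ->
  (forall c, acc_set t D w c -> y <= c) -> (forall e, 0 < e -> acc_set t D w (y + e)) ->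
  risk t D w = y.
Proof.
move=> tT HD H1 H2; have [_ C1 C2] := risk_props t D w tT HD.
apply/eqP; rewrite eq_le; apply/andP; split; apply/ler_addgt0Pr => e e0.
  exact: C1 (H2 _ e0).
exact: H1 (C2 _ e0).
Qed.

Lemma risk_acc_set t D D' w w' :
  acc_set t D w = acc_set t D' w' -> risk t D w = risk t D' w'.
Proof. by move=> E; rewrite /risk /rho -/(acc_set t D w) E. Qed.

Lemma risk_local t D D' w : (t <= T)%N -> adapted Ret T D -> adapted Ret T D' ->
  (forall u v, (t <= u <= T)%N -> atom Ret t w v -> D u v = D' u v) ->
  risk t D w = risk t D' w.
Proof.
move=> tT HD HD' E; apply: risk_acc_set; apply/seteqP; split => c /=; rewrite /acc_set /=;
  rewrite (dcai_A2 HA (A := atom Ret t w) (D := plus_at D (fun _ => c) t)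
    (D' := plus_at D' (fun _ => c) t)) //; try exact: adapted_plus; try exact: meas_atom;
  try exact: atom_refl; by move=> u v uT Av; rewrite /plus_at E.
Qed.

Lemma risk_meas t D : (t <= T)%N -> adapted Ret T D -> meas Ret t (risk t D).
Proof.
move=> tT HD w w' E; apply: risk_acc_set; apply/seteqP; split => c /=; rewrite /acc_set /=;
  by rewrite (dcai_A1 HA tT (adapted_plus HD meas_const) E).
Qed.

(* Right continuity: D is acceptable at level x iff its risk is nonpositive. *)
Lemma acceptable_iff t D w : (t <= T)%N -> adapted Ret T D ->
  (x%:E <= alpha t D w)%E <-> risk t D w <= 0.
Proof.
move=> tT HD; have [_ C1 C2] := risk_props t D w tT HD; split => H.
  apply: C1; rewrite /acc_set /=; suff -> : plus_at D (fun _ => 0) t = D by [].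
  by apply/funext => u; apply/funext => v; rewrite /plus_at; case: (u == t); rewrite addr0.
have He : forall e, 0 < e -> (x%:E <= alpha t (plus_at D (fun _ => e) t) w)%E.
  by move=> e e0; apply: (acc_set_up _ _ _ _ _ tT HD (C2 e e0)); lra.
have := Hrc t D w tT HD.
apply: (closed_cvg (fun y => x%:E <= y)%E) => //; first exact: closed_ereal_le_ereal.
near=> c; apply: He; near: c; exact: nbhs_right_gt.
Unshelve. all: by end_near.
Qed.

Lemma risk_cash t D m w : (t <= T)%N -> adapted Ret T D -> meas Ret t m ->
  risk t (plus_at D m t) w = risk t D w - m w.
Proof.
move=> tT HD Hm.
rewrite (risk_local t (plus_at D m t) (plus_at D (fun _ => m w) t) w) //; first last.
- by move=> u v _ Av; rewrite /plus_at (atom_meas Hm Av).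
- exact: adapted_plus.
- exact: adapted_plus.
have [_ C1 C2] := risk_props t D w tT HD.
have E c : plus_at (plus_at D (fun _ => m w) t) (fun _ => c) t = plus_at D (fun _ => c + m w) t.
  by apply/funext => u; apply/funext => v; rewrite /plus_at; case: (u == t); lra.
apply: risk_unique => //; first exact: adapted_plus.
  by move=> c; rewrite /acc_set /= E => /C1; lra.
move=> e e0; rewrite /acc_set /= E.
have -> : risk t D w - m w + e + m w = risk t D w + e by lra.
exact: C2.
Qed.

Lemma risk_scale t D lam w : 0 < lam -> (t <= T)%N -> adapted Ret T D ->
  risk t (scale (fun _ => lam) D) w = lam * risk t D w.
Proof.
move=> lam0 tT HD; have [_ C1 C2] := risk_props t D w tT HD.
have lamK c : lam * (c / lam) = c by rewrite mulrC divfK // gt_eqF.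
have A c : alpha t (plus_at (scale (fun _ => lam) D) (fun _ => c) t) w =
    alpha t (plus_at D (fun _ => c / lam) t) w.
  have -> : plus_at (scale (fun _ => lam) D) (fun _ => c) t =
      scale (fun _ => lam) (plus_at D (fun _ => c / lam) t).
    apply/funext => u; apply/funext => v; rewrite /plus_at /scale.
    by case: (u == t); rewrite mulrDr ?lamK // mulr0.
  by rewrite (dcai_A4 HA) //; try exact: adapted_plus; exact: meas_const.
apply: risk_unique => //; first exact: adapted_scale.
  by move=> c; rewrite /acc_set /= A => /C1 H; rewrite -[c]lamK ler_pM2l.
move=> e e0; rewrite /acc_set /= A.
have -> : (lam * risk t D w + e) / lam = risk t D w + e / lam.
  by rewrite mulrDl mulrC mulrA mulVf ?mul1r // gt_eqF.
by apply: C2; exact: divr_gt0.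
Qed.

Lemma risk_mono t D D' w : (t <= T)%N -> adapted Ret T D -> adapted Ret T D' ->
  (forall u v, (t <= u <= T)%N -> D' u v <= D u v) -> risk t D w <= risk t D' w.
Proof.
move=> tT HD HD' Hle; have [_ C1 _] := risk_props t D w tT HD.
have [_ _ C2] := risk_props t D' w tT HD'.
apply/ler_addgt0Pr => e e0; apply: C1; apply: le_trans (C2 e e0) _.
apply: (dcai_A3 HA) => //; try exact: adapted_plus.
by move=> u v uT; rewrite /plus_at lerD2r; exact: Hle.
Qed.

(* Homogeneity forces the risk of the zero cash flow to vanish. *)
Lemma risk_zero t w : (t <= T)%N -> risk t (fun _ _ => 0) w = 0.
Proof.
move=> tT; have H0 : adapted Ret T (fun _ _ => 0 : R) by move=> u _; exact: meas_const.
have := risk_scale t (fun _ _ => 0) 2 w (ltr0Sn _ 1) tT H0.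
have -> : scale (fun _ => 2) (fun _ _ => 0) = (fun (_ : nat) (_ : Omega) => 0 : R).
  by apply/funext => u; apply/funext => v; rewrite /scale mulr0.
lra.
Qed.

Definition excess_return s (pi : 'rV[R]_d) : Omega -> R :=
  fun w => \sum_(i < d) Ret s.+1 w 0 i * pi 0 i - 1.

Lemma excess_return_meas s pi : meas Ret s.+1 (excess_return s pi).
Proof. by move=> w w' E; rewrite /excess_return (meas_Ret (isT : (0 < s.+1)%N) w w' E). Qed.

Definition period_risk (pi : 'rV[R]_d) (w0 : Omega) : R :=
  risk 0 (single_at (excess_return 0 pi) 1) w0.

Definition acceptable_portfolio (pi : 'rV[R]_d) : Prop :=
  simplex pi /\ forall w0, period_risk pi w0 <= 0.

Lemma single_at_idem (Z : Omega -> R) n : single_at (single_at Z n n) n = single_at Z n.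
Proof.
by apply/funext => u; apply/funext => v; rewrite /single_at; case: (u == n); rewrite ?eqxx.
Qed.

(* Condition (I) together with the i.i.d. returns: the one-period risk of pi
   is the same at every time s < T and every node. *)
Lemma period_risk_transfer s pi w w0 : (s < T)%N ->
  risk s (single_at (excess_return s pi) s.+1) w = period_risk pi w0.
Proof.
move=> sT; have T_gt0 : (0 < T)%N by apply: leq_ltn_trans sT.
pose Z v := if atom Ret s w v then excess_return s pi v else 0.
have HZ : meas Ret s.+1 Z.
  exact: (meas_comp2 (fun (b : bool) r => if b then r else 0)
    (meas_mono (leqnSn s) meas_atom) (excess_return_meas s pi)).
rewrite (risk_local s _ (single_at Z s.+1) w (ltnW sT)); first last.
- by move=> u v _ Av; rewrite /single_at /Z Av.
- exact: adapted_single HZ.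
- exact: adapted_single (excess_return_meas s pi).
pose f (r : 'rV[R]_d) := \sum_(i < d) r 0 i * pi 0 i - 1.
rewrite /period_risk /risk.
have := HI x x_gt0 s 0 w w0 (single_at Z s.+1) (single_at (excess_return 0 pi) 1) sT T_gt0
  (adapted_single HZ) (adapted_single (excess_return_meas 0 pi)) _ _ _ w w0 atom_refl atom0.
rewrite /one_step !single_at_idem => -> //.
- by move=> v; rewrite /single_at eqxx /Z => /negbTE ->.
- by move=> v; rewrite atom0.
move=> v; rewrite /single_at !eqxx.
have -> : (fun w' => atom Ret s w w' && (Z w' == v)) =
    (fun w' => atom Ret s w w' && (f (Ret s.+1 w') == v)).
  by apply/funext => w'; rewrite /Z; case: (atom Ret s w w').
exact: (cond_law_return s w w0 f v sT).
Qed.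

Definition tail_risk t V h s w : R := risk s (tail_div t V h s) w.

Section TailRisk.
Context {t : nat} {V : Omega -> R} {h : nat -> Omega -> 'rV[R]_d}.
Hypothesis HV : meas Ret t V.
Hypothesis HVp : forall w, 0 < V w.
Hypothesis Hadm : admissible Ret T t V h.
Local Notation W := (wealth Ret t V h).
Local Notation G := (tail_risk t V h).

Lemma tail_risk_T w : G T w = 0.
Proof. by rewrite /tail_risk tail_div_T risk_zero. Qed.

(* Strong time consistency: the tail risk at s is the risk of receiving at
   s+1 the wealth increment minus the tail risk at s+1. *)
Lemma tail_risk_step s w : (t <= s)%N -> (s < T)%N ->
  G s w = risk s (single_at (fun v => W s.+1 v - W s v - G s.+1 v) s.+1) w.
Proof.
move=> ts sT; set Z := fun v => _.
have AD1 := tail_div_adapted HV Hadm s.+1 (leqW ts).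
have AD := tail_div_adapted HV Hadm s ts.
have Hincr := wealth_incr_meas HV Hadm s ts sT.
have HZ : meas Ret s.+1 Z.
  by apply: (meas_comp2 (fun a b : R => a - b)) Hincr _; exact: risk_meas.
have AZ : adapted Ret T (single_at Z s.+1) := adapted_single HZ.
rewrite /tail_risk /risk (Hstc x x_gt0 s _ _ sT AD AZ) //.
  by move=> v; rewrite /tail_div /single_at ltnn /= (ltn_eqF (ltnSn s)).
move=> v; rewrite !rho_risk //; congr EFin.
rewrite (tail_div_step s sT) (risk_cash _ _ _ _ sT AD1 Hincr).
have -> : single_at Z s.+1 = plus_at (fun _ _ => 0) Z s.+1.
  by apply/funext => u; apply/funext => v'; rewrite /single_at /plus_at add0r.
have A0 : adapted Ret T (fun _ _ => 0 : R) by move=> u _; exact: meas_const.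
by rewrite (risk_cash _ _ _ _ sT A0 HZ) risk_zero // /Z /tail_risk; lra.
Qed.

(* Homogeneity and locality: the risk of the increment of wealth is the
   current wealth times the one-period risk of the current weights. *)
Lemma increment_risk s w w0 : (t <= s)%N -> (s < T)%N ->
  risk s (single_at (fun v => W s.+1 v - W s v) s.+1) w =
  W s w * period_risk (weights t V h s w) w0.
Proof.
move=> ts sT; have W_gt0 := wealth_gt0 HVp Hadm s w ts (ltnW sT).
have Hms : meas Ret s (W s) by apply: (wealth_meas HV Hadm s); rewrite ts ltnW.
have [Hh _] := Hadm s (introT andP (conj ts sT)).
rewrite -(period_risk_transfer s _ w w0 sT).
rewrite -(risk_scale s _ (W s w) w W_gt0 (ltnW sT) (adapted_single (excess_return_meas _ _))).
apply: risk_local; [exact: ltnW | exact: adapted_single (wealth_incr_meas HV Hadm s ts sT) | |].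
  exact: adapted_scale (adapted_single (excess_return_meas _ _)).
move=> u v _ Av; rewrite /single_at /scale; case: (u == s.+1); last by rewrite mulr0.
rewrite /excess_return wealth_succ // (atom_meas Hh Av) (atom_meas Hms Av).
rewrite mulrBr mulr1 big_distrr /=; congr (_ - _); apply: eq_bigr => i _.
by rewrite mxE mulrCA mulVKf // gt_eqF.
Qed.

(* Comparing the two, by monotonicity of the risk, according to the sign of
   the tail risk at s+1. *)
Lemma tail_risk_lower s w w0 : (t <= s)%N -> (s < T)%N -> (forall v, 0 <= G s.+1 v) ->
  W s w * period_risk (weights t V h s w) w0 <= G s w.
Proof.
move=> ts sT Hge; rewrite tail_risk_step // -(increment_risk s w w0) //.
apply: risk_mono; [exact: ltnW | exact: adapted_single (wealth_incr_meas HV Hadm s ts sT) | |].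
  apply: adapted_single; apply: (meas_comp2 (fun a b : R => a - b)).
    exact: wealth_incr_meas.
  by apply: risk_meas => //; exact: tail_div_adapted HV Hadm s.+1 (leqW ts).
by move=> u v _; rewrite /single_at; case: (u == s.+1) => //; have := Hge v; lra.
Qed.

Lemma tail_risk_upper s w w0 : (t <= s)%N -> (s < T)%N -> (forall v, G s.+1 v <= 0) ->
  G s w <= W s w * period_risk (weights t V h s w) w0.
Proof.
move=> ts sT Hle; rewrite tail_risk_step // -(increment_risk s w w0) //.
apply: risk_mono; [exact: ltnW | | exact: adapted_single (wealth_incr_meas HV Hadm s ts sT) |].
  apply: adapted_single; apply: (meas_comp2 (fun a b : R => a - b)).
    exact: wealth_incr_meas.
  by apply: risk_meas => //; exact: tail_div_adapted HV Hadm s.+1 (leqW ts).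
by move=> u v _; rewrite /single_at; case: (u == s.+1) => //; have := Hle v; lra.
Qed.

Lemma tail_risk_gt0 : (t < T)%N ->
  (forall pi, simplex pi -> exists w0, 0 < period_risk pi w0) -> forall w, 0 < G t w.
Proof.
move=> tT Hbad.
have step s : (t <= s < T)%N -> (forall v, 0 <= G s.+1 v) -> forall w, 0 < G s w.
  move=> /andP[ts sT] Hge w.
  have [w0 Hw0] := Hbad _ (weights_simplex HVp Hadm s w (introT andP (conj ts sT))).
  apply: lt_le_trans (tail_risk_lower s w w0 ts sT Hge).
  exact: mulr_gt0 (wealth_gt0 HVp Hadm s w ts (ltnW sT)) Hw0.
have Hge : forall s, (t < s <= T)%N -> forall v, 0 <= G s v.
  apply: backward_induction => [v|s /andP[ts sT] Hge v]; first by rewrite tail_risk_T.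
  by apply/ltW/(step s) => //; rewrite sT ltnW.
by apply: (step t); rewrite ?leqnn ?tT // => v; apply: Hge; rewrite leqnn.
Qed.

Lemma tail_risk_le0 pi : acceptable_portfolio pi ->
  (forall s w, (t <= s)%N -> h s w = W s w *: pi) -> (t <= T)%N -> forall w, G t w <= 0.
Proof.
move=> [_ Hpi] Hconst tT.
apply: (backward_induction (fun s => forall v, G s v <= 0) t T) => [|s /andP[ts sT] Hle w|].
- by move=> v; rewrite tail_risk_T.
- apply: le_trans (tail_risk_upper s w w ts sT Hle) _.
  have -> : weights t V h s w = pi.
    have W_gt0 := wealth_gt0 HVp Hadm s w ts (ltnW sT).
    by rewrite /weights Hconst // scalerA mulVf ?scale1r // gt_eqF.
  exact: mulr_ge0_le0 (ltW (wealth_gt0 HVp Hadm s w ts (ltnW sT))) (Hpi w).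
- by rewrite leqnn.
Qed.

End TailRisk.

(* Main equivalence: from any positive wealth at any time t < T, some
   admissible strategy is acceptable at level x iff an acceptable portfolio
   exists; the right-hand side depends neither on t, nor on V, nor on w. *)
Lemma acceptable_strategy_iff t V w : (t < T)%N -> meas Ret t V -> (forall w, 0 < V w) ->
  (exists h, admissible Ret T t V h /\ (x%:E <= alpha t (dividends Ret T t V h) w)%E) <->
  exists pi, acceptable_portfolio pi.
Proof.
move=> tT HV HVp; split.
  move=> [h [Hadm Hx]]; apply: boolp.contrapT => Hnone.
  have Hbad pi : simplex pi -> exists w0, 0 < period_risk pi w0.
    move=> Hpi; apply: boolp.contrapT => Hall; apply: Hnone; exists pi; split => // w0.
    by rewrite leNgt; apply/negP => Hw0; apply: Hall; exists w0.
  have AD := tail_div_adapted HV Hadm t (leqnn t).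
  have := (acceptable_iff t (tail_div t V h t) w (ltnW tT) AD).1 Hx.
  by rewrite leNgt (tail_risk_gt0 HV HVp Hadm tT Hbad).
move=> [pi Hpi]; have [h [Hadm Hh]] := constant_weights_strategy t V pi HV HVp Hpi.1.
exists h; split => //; apply/(acceptable_iff t (tail_div t V h t) w (ltnW tT)).
  exact: tail_div_adapted HV Hadm t (leqnn t).
exact: (tail_risk_le0 HV HVp Hadm pi Hpi Hh (ltnW tT)).
Qed.

End Level.

(* Maximal acceptability compares in both directions: a strategy from
   (t1, V1) acceptable at a level y yields an acceptable portfolio, hence a
   strategy from (t2, V2) acceptable at the same level. *)
Lemma max_acc_le t1 V1 w1 t2 V2 w2 :
  (t1 < T)%N -> meas Ret t1 V1 -> (forall w, 0 < V1 w) ->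
  (t2 < T)%N -> meas Ret t2 V2 -> (forall w, 0 < V2 w) ->
  (max_acc Ret T alpha t1 V1 w1 <= max_acc Ret T alpha t2 V2 w2)%E.
Proof.
move=> t1T HV1 HV1p t2T HV2 HV2p.
rewrite {1}/max_acc; apply: ge_ereal_sup => _ [h1 Hadm1 <-].
have t1t1 : (t1 <= t1 < T)%N by rewrite leqnn t1T.
have [h2 [Hadm2 _]] := constant_weights_strategy t2 V2 _ HV2 HV2p
  (weights_simplex HV1p Hadm1 t1 w1 t1t1).
have sup_ge0 : (0 <= max_acc Ret T alpha t2 V2 w2)%E.
  apply: le_trans (dcai_range HA w2 (ltnW t2T) (tail_div_adapted HV2 Hadm2 t2 (leqnn t2))) _.
  by apply: ereal_sup_ubound; exists h2.
apply: (ereal_le_by_levels _ _ sup_ge0) => y y0 Hy.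
have [pi Hpi] := (acceptable_strategy_iff y y0 t1 V1 w1 t1T HV1 HV1p).1
  (ex_intro _ h1 (conj Hadm1 Hy)).
have [h3 [Hadm3 Hy3]] := (acceptable_strategy_iff y y0 t2 V2 w2 t2T HV2 HV2p).2
  (ex_intro _ pi Hpi).
by apply: le_trans Hy3 _; apply: ereal_sup_ubound; exists h3.
Qed.

End Model.

Theorem theorem3p2 (R : realType) (Omega : finType) (d T : nat)
    (P : Omega -> R) (Ret : nat -> Omega -> 'rV[R]_d)
    (alpha : nat -> proc -> Omega -> \bar R) :
  (forall w, 0 < P w) -> \sum_(w : Omega) P w = 1 ->
  (forall s w (i : 'I_d), (1 <= s <= T)%N -> 0 < Ret s w 0 i) ->
  iid_returns Ret T P ->
  is_DCAI Ret T alpha ->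
  normalized Ret T alpha ->
  right_continuous Ret T alpha ->
  (forall x : R, 0 < x -> strongly_time_consistent Ret T (rho alpha x)) ->
  (forall x : R, 0 < x -> condition_I Ret T P (one_step alpha x)) ->
  forall (t : nat) (V : Omega -> R), (t < T)%N -> meas Ret t V ->
    (forall w, 0 < V w) ->
    forall w w' : Omega,
      max_acc Ret T alpha t V w = max_acc Ret T alpha 0 (fun _ => 1) w'.
Proof.
move=> HP HP1 Hret Hiid HA Hn Hrc Hstc HI t V tT HV HVp w w'.
have T_gt0 : (0 < T)%N by apply: leq_ltn_trans tT.
have one_meas : meas Ret 0 (fun _ : Omega => 1 : R) by [].
have one_gt0 : forall w : Omega, 0 < (1 : R) by move=> _; exact: ltr01.
have le := @max_acc_le R Omega d T P Ret alpha HP HP1 Hret Hiid HA Hn Hrc Hstc HI.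
by apply/eqP; rewrite eq_le !le.
Qed.
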